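(* Let $G$ be a group and $A$ an additive abelian group with a right $G$-action by group automorphisms. For every $n\in\mathbb Z_+$, $a\in A$ and $g_1,\dots,g_{n+1}\in G$, $$[D^{n+1}a](g_1,g_2,\dots,g_{n+1})=[D^n(a^{g_1})](g_2,\dots,g_{n+1})-[D^na](g_2,\dots,g_{n+1}).$$
   Context: Right action: $a\mapsto a^g$, $a^{\mathbf e}=a$, $(a^g)^h=a^{gh}$, additive in $a$; $\mathbf e$ is the identity of $G$. $\mathcal C^0(G,A)=A$; for $n\ge1$, $\mathcal C^n(G,A)$ consists of functions $G^n\to A$ vanishing whenever some argument is $\mathbf e$. For $n\ge1$, $(d_nc)(g_1,\dots,g_n)=[c(g_1,\dots,g_{n-1})]^{g_n}-c(g_1,\dots,g_{n-1})$; $D^0=\mathrm{id}_A$, $D^n=d_nD^{n-1}$ (so for $n=0$ the formula reads $[D^1a](g_1)=a^{g_1}-a$). *)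

From HB Require Import structures.
From mathcomp Require Import all_boot all_order all_algebra.
Set Implicit Arguments. Unset Strict Implicit. Unset Printing Implicit Defensive.
Import GRing.Theory.
Local Open Scope ring_scope.

(* An element of G^n is a function 'I_n -> G, the i-th
   argument g_{i+1} being g i. *)

Definition dcob (G : Type) (A : zmodType) (act : A -> G -> A) (n : nat)
  (c : ('I_n -> G) -> A) : ('I_n.+1 -> G) -> A :=
  fun g => let c0 := c (fun i => g (widen_ord (leqnSn n) i)) in
           act c0 (g ord_max) - c0.

Fixpoint Dcob (G : Type) (A : zmodType) (act : A -> G -> A) (n : nat)
  : A -> ('I_n -> G) -> A :=
  match n with
  | 0 => fun a _ => a
  | m.+1 => fun a => @dcob G A act m (@Dcob G A act m a)
  end.

Definition is_group (G : Type) (mul : G -> G -> G) (e : G) (inv : G -> G) :=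
  [/\ forall x y z, mul x (mul y z) = mul (mul x y) z,
      forall x, mul e x = x, forall x, mul x e = x,
      forall x, mul (inv x) x = e & forall x, mul x (inv x) = e].

Definition is_right_action (G : Type) (mul : G -> G -> G) (e : G)
  (A : zmodType) (act : A -> G -> A) :=
  [/\ forall a, act a e = a,
      forall a g h, act (act a g) h = act a (mul g h) &
      forall g a b, act (a + b) g = act a g + act b g].

From mathcomp Require Import all_boot all_order all_algebra.
Set Implicit Arguments.
Unset Strict Implicit.
Unset Printing Implicit Defensive.
Import GRing.Theory.
Local Open Scope ring_scope.

(* Induction on n using D^(n+1) = d_(n+1) D^n, which acts on the last
   argument: that argument is the same for g and for g o lift ord0, and d_(n+1)
   is additive in the cochain because each a |-> a^h is. *)

Section Coboundary.

Variables (G : Type) (A : zmodType) (act : A -> G -> A).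
Hypothesis act_add : forall g a b, act (a + b) g = act a g + act b g.

Lemma actB g a b : act (a - b) g = act a g - act b g.
Proof. by apply: (addIr (act b g)); rewrite -act_add !subrK. Qed.

Lemma eq_Dcob n (f h : 'I_n -> G) a : f =1 h -> Dcob act a f = Dcob act a h.
Proof.
elim: n f h a => [|n IH] f h a eq_fh //=.
by rewrite /dcob eq_fh (IH _ (fun i => h (widen_ord (leqnSn n) i))).
Qed.

Lemma DcobS n a (g : 'I_n.+1 -> G) :
  Dcob act a g =
    act (Dcob act a (g \o widen_ord (leqnSn n))) (g ord_max)
    - Dcob act a (g \o widen_ord (leqnSn n)).
Proof. by []. Qed.

Lemma Dcob_recl n a (g : 'I_n.+1 -> G) :
  Dcob act a g =
    Dcob act (act a (g ord0)) (fun i => g (lift ord0 i))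
    - Dcob act a (fun i => g (lift ord0 i)).
Proof.
elim: n a g => [|n IH] a g.
  by rewrite /= /dcob (_ : ord_max = ord0) //; apply: val_inj.
have widen_lift : g \o widen_ord (leqnSn n.+1) \o lift ord0
    =1 g \o lift ord0 \o widen_ord (leqnSn n).
  by move=> i; congr g; apply: val_inj.
rewrite [LHS]DcobS IH actB !DcobS !(eq_Dcob _ widen_lift) /=.
rewrite (_ : widen_ord _ ord0 = ord0); last exact: val_inj.
rewrite (_ : lift ord0 ord_max = ord_max); last exact: val_inj.
by rewrite opprD addrACA -opprD.
Qed.

End Coboundary.

Theorem lemma1p6 (G : Type) (mul : G -> G -> G) (e : G) (inv : G -> G)
  (A : zmodType) (act : A -> G -> A)
  (HG : is_group mul e inv) (Hact : is_right_action mul e act)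
  (n : nat) (a : A) (g : 'I_n.+1 -> G) :
  @Dcob G A act n.+1 a g =
    @Dcob G A act n (act a (g ord0)) (fun i => g (lift ord0 i))
    - @Dcob G A act n a (fun i => g (lift ord0 i)).
Proof. by case: Hact => _ _ act_add; apply: Dcob_recl. Qed.
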